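(* Let $(X,\|\cdot\|)$ be a normed linear space over $\mathbb{R}$ or $\mathbb{C}$. Then for all $x,a\in X$, $$\langle x,a\rangle_i\ \ge\ \tfrac12\left(\|a\|^2-\|x-a\|^2\right).$$ Moreover, if $X\neq\{0\}$, the constant $\tfrac12$ cannot be replaced by a larger quantity on the set of pairs with $\|a\|>\|x-a\|$: there is no constant $C>\tfrac12$ such that $\langle x,a\rangle_i\ge C\left(\|a\|^2-\|x-a\|^2\right)$ for all $x,a\in X$ with $\|a\|>\|x-a\|$.
   Context: For a normed linear space $(X,\|\cdot\|)$, the inferior semi-inner product is defined for $x,y\in X$ by $\langle x,y\rangle_i:=\lim_{t\to 0^-}\frac{\|y+tx\|^2-\|y\|^2}{2t}$ (the limit exists by convexity of $t\mapsto\frac12\|y+tx\|^2$). *)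

From HB Require Import structures.
From mathcomp Require Import all_boot all_order all_algebra.
From mathcomp Require Import all_classical all_reals all_analysis.
Set Implicit Arguments. Unset Strict Implicit. Unset Printing Implicit Defensive.
Import Order.TTheory GRing.Theory Num.Theory.
Import numFieldNormedType.Exports.
Local Open Scope classical_set_scope.
Local Open Scope ring_scope.

Definition semi_inner_i {R : realType} {V : normedModType R} (x y : V) : R :=
  lim ((fun t : R => (`|y + t *: x| ^+ 2 - `|y| ^+ 2) / (2 * t)) @ 0^'-).

From HB Require Import structures.
From mathcomp Require Import all_boot all_order all_algebra.
From mathcomp Require Import all_classical all_reals all_analysis.
From mathcomp Require Import ring lra.
Import Order.TTheory GRing.Theory Num.Theory.
Import numFieldNormedType.Exports.
Local Open Scope ring_scope.

(** The left difference quotient of [t |-> ||a + t x||^2 / 2] at [0] is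
    nondecreasing (convexity) and bounded by [||x|| ||a||], so it converges, and
    [<x, a>_i] lies between its value at [t = -1], which is
    [(||a||^2 - ||a - x||^2) / 2], and [||x|| ||a||].  For [v <> 0] and
    [x = (1 - k) v], [a = v] the upper bound [(1 - k) ||v||^2] beats
    [C (||a||^2 - ||x - a||^2) = C (1 - k^2) ||v||^2] as soon as [C (1 + k) > 1],
    e.g. for [k = 1 / (2 C)] when [C > 1/2]. *)

Section SemiInnerProduct.
Context {R : realType} {V : normedModType R}.

Definition sip_quotient (x a : V) (t : R) : R :=
  (`|a + t *: x| ^+ 2 - `|a| ^+ 2) / (2 * t).

Lemma sip_quotient_le (x a : V) (s t : R) :
  s < 0 -> t < 0 -> s <= t -> sip_quotient x a s <= sip_quotient x a t.
Proof.
move=> s0 t0 st; rewrite /sip_quotient.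
set Ns := `|a + s *: x|; set Nt := `|a + t *: x|; set N0 := `|a|.
have Ns0 : 0 <= Ns by exact: normr_ge0.
have Nt0 : 0 <= Nt by exact: normr_ge0.
have N00 : 0 <= N0 by exact: normr_ge0.
have convex_comb : (-s) *: (a + t *: x) = (-t) *: (a + s *: x) + (t - s) *: a.
  rewrite !scalerDr !scalerA scalerBl !scaleNr !mulNr (mulrC t s).
  by rewrite addrAC addrA addNr add0r addrC.
have triangle : (-s) * Nt <= (-t) * Ns + (t - s) * N0.
  have := ler_normD ((-t) *: (a + s *: x)) ((t - s) *: a).
  by rewrite -convex_comb !normrZ !ger0_norm //; lra.
have sqr_triangle : ((-s) * Nt) ^+ 2 <= ((-t) * Ns + (t - s) * N0) ^+ 2.
  by rewrite ler_sqr ?nnegrE; [|nra|nra].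
(* convexity of the square: the cross term is bounded via [0 <= (Ns - N0)^2] *)
have sqr_convex :
    ((-t) * Ns + (t - s) * N0) ^+ 2 <= (-s) * ((-t) * Ns ^+ 2 + (t - s) * N0 ^+ 2).
  have : 0 <= (-t) * (t - s) * (Ns - N0) ^+ 2 by rewrite mulr_ge0 ?sqr_ge0 //; nra.
  nra.
rewrite ler_ndivrMr; last lra.
rewrite mulrAC ler_ndivrMr; last lra.
nra.
Qed.

Lemma sip_quotient_le_norm (x a : V) (t : R) :
  t < 0 -> sip_quotient x a t <= `|x| * `|a|.
Proof.
move=> t0; rewrite /sip_quotient.
set Nt := `|a + t *: x|; set N0 := `|a|; set X := `|x|.
have Nt0 : 0 <= Nt by exact: normr_ge0.
have N00 : 0 <= N0 by exact: normr_ge0.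
have X0 : 0 <= X by exact: normr_ge0.
have triangle : N0 <= Nt + (-t) * X.
  have := ler_normD (a + t *: x) ((-t) *: x).
  by rewrite normrZ ger0_norm ?scaleNr ?addrK //; lra.
rewrite ler_ndivrMr; last lra.
have [small|large] := lerP N0 ((-t) * X).
- have : N0 * N0 <= N0 * ((-t) * X) by exact: ler_wpM2l.
  nra.
- have : (N0 - (-t) * X) ^+ 2 <= Nt ^+ 2 by rewrite ler_sqr ?nnegrE; lra.
  nra.
Qed.

Lemma sip_quotient_cvg (x a : V) : cvg (sip_quotient x a @ 0^'-)%classic.
Proof.
apply: nondecreasing_at_left_is_cvgr.
- apply: nearW => y s t; rewrite !in_itv /= => /andP[_ s0] /andP[_ t0].
  exact: sip_quotient_le.
- near=> y; exists (`|x| * `|a|) => _ [t + <-].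
  by rewrite /= in_itv /= => /andP[_ t0]; exact: sip_quotient_le_norm.
Unshelve. all: by end_near. Qed.

Lemma semi_inner_iE (x a : V) :
  semi_inner_i x a = lim (sip_quotient x a @ 0^'-)%classic.
Proof. by []. Qed.

Lemma sip_quotient_le_semi_inner_i (x a : V) (t : R) :
  t < 0 -> sip_quotient x a t <= semi_inner_i x a.
Proof.
move=> t0; rewrite semi_inner_iE.
apply: limr_ge; first exact: sip_quotient_cvg.
near=> s; apply: sip_quotient_le => //; apply: ltW; near: s; exact: nbhs_left_gt.
Unshelve. all: by end_near. Qed.

Lemma semi_inner_i_le_norm (x a : V) : semi_inner_i x a <= `|x| * `|a|.
Proof.
rewrite semi_inner_iE; apply: limr_le; first exact: sip_quotient_cvg.
near=> t; apply: sip_quotient_le_norm.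
by near: t; exact: nbhs_left_lt.
Unshelve. all: by end_near. Qed.

Lemma semi_inner_i_ge (x a : V) :
  2^-1 * (`|a| ^+ 2 - `|x - a| ^+ 2) <= semi_inner_i x a.
Proof.
have -> : 2^-1 * (`|a| ^+ 2 - `|x - a| ^+ 2) = sip_quotient x a (-1).
  by rewrite /sip_quotient scaleN1r distrC; field.
by apply: sip_quotient_le_semi_inner_i; lra.
Qed.

Lemma semi_inner_i_scale_lt (C k : R) (v : V) :
  0 < k -> k < 1 -> 1 < C * (1 + k) -> v != 0 ->
  let x := (1 - k) *: v in
  `|x - v| < `|v| /\ semi_inner_i x v < C * (`|v| ^+ 2 - `|x - v| ^+ 2).
Proof.
move=> k0 k1 Ck v0 x; set N := `|v|.
have N0 : 0 < N by rewrite normr_gt0.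
have dist : `|x - v| = k * N.
  by rewrite /x scalerBl scale1r addrAC subrr add0r normrN normrZ ger0_norm //; lra.
rewrite dist; split; first nra.
apply: (le_lt_trans (semi_inner_i_le_norm _ _)).
rewrite normrZ ger0_norm -/N; last lra.
have : 0 < (1 - k) * N ^+ 2 by apply: mulr_gt0; [lra | exact: exprn_gt0].
nra.
Qed.

End SemiInnerProduct.

Theorem lemma2p1 (R : realType) (V : normedModType R) :
  (forall x a : V, semi_inner_i x a >= 2^-1 * (`|a| ^+ 2 - `|x - a| ^+ 2))
  /\ ((exists v : V, v != 0) ->
      ~ (exists C : R, 2^-1 < C /\
           forall x a : V, `|x - a| < `|a| ->
             semi_inner_i x a >= C * (`|a| ^+ 2 - `|x - a| ^+ 2))).
Proof.
split; first exact: semi_inner_i_ge.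
move=> [v v0] [C [C2 HC]].
have k0 : 0 < (2 * C)^-1 by rewrite invr_gt0; lra.
have k1 : (2 * C)^-1 < 1 by rewrite invf_lt1; lra.
have Ck : 1 < C * (1 + (2 * C)^-1).
  by rewrite mulrDr mulr1 invfM mulrCA mulfV ?mulr1; lra.
have [dist_lt sip_lt] := semi_inner_i_scale_lt _ _ _ k0 k1 Ck v0.
by have := HC _ _ dist_lt; rewrite leNgt sip_lt.
Qed.
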